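(* Let $1\le m<n$, $d\in[n]$, let every $v_j$ be $d$-self-bounding, fix $\mathbf s$, rename bidders so that $v_1(\mathbf s)\ge\cdots\ge v_n(\mathbf s)>0$, and let $k=\max\{i:v_i(\mathbf s)>v_m(\mathbf s)/2\}$. For $i\in[n]$ define $A_i=\sum_{j=1}^k\frac{m}{j(j+1)}\log_2^\dagger\!\big(v_j(\mathbf s)/\underline v_j^{(i)}(\mathbf s)\big)$. Then $\sum_{i=m}^kA_i\le 2dm$.
   Context: Signals $s_i\in S_i\subseteq\mathbb R$, $\mathbf S=S_1\times\cdots\times S_n$, valuations $v_j:\mathbf S\to\mathbb R_{>0}$. Lower estimates $\underline v_j^{(i)}(\mathbf s)=\inf_{o_i\in S_i}v_j(o_i,\mathbf s_{-i})$. $v$ is $d$-self-bounding if $\sum_i(v(\mathbf s)-\inf_{o_i}v(o_i,\mathbf s_{-i}))\le d\,v(\mathbf s)$ for all $\mathbf s$. $\log_2^\dagger(\alpha)=\max(0,\min(1,\log_2\alpha))$, with $a/0=\infty$, $\log_2\infty=\infty$. *)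

From HB Require Import structures.
From mathcomp Require Import all_boot all_order all_algebra.
From mathcomp Require Import all_classical all_reals all_analysis.
Set Implicit Arguments. Unset Strict Implicit. Unset Printing Implicit Defensive.
Import Order.TTheory GRing.Theory Num.Theory.
Local Open Scope classical_set_scope.
Local Open Scope ring_scope.

(* Bidders and signal coordinates are indexed by 'I_n; bidder number j
   (1-based, as in the paper) is the ordinal with value j-1. *)

Section Defs.
Variable R : realType.
Variable n : nat.

Definition upd (s : 'I_n -> R) (i : 'I_n) (o : R) : 'I_n -> R :=
  fun l => if l == i then o else s l.

Definition in_prod (S : 'I_n -> set R) (s : 'I_n -> R) : Prop :=
  forall i, S i (s i).

Definition lower_est (S : 'I_n -> set R) (v : ('I_n -> R) -> R)
    (i : 'I_n) (s : 'I_n -> R) : R :=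
  inf [set v (upd s i o) | o in S i].

Definition self_bounding (S : 'I_n -> set R) (d : R)
    (v : ('I_n -> R) -> R) : Prop :=
  forall s, in_prod S s ->
    \sum_(i < n) (v s - lower_est S v i s) <= d * v s.

(* valuation of the bidder with (1-based) number j; 0 if out of range *)
Definition vnum (v : 'I_n -> ('I_n -> R) -> R) (j : nat) (s : 'I_n -> R) : R :=
  if (insub j.-1 : option 'I_n) is Some o then v o s else 0.
End Defs.

(* log_2^dagger (a / b) = max(0, min(1, log_2 (a/b))), with the convention
   a/0 = +oo and log_2 +oo = +oo, so the value is 1 when b = 0. *)
Definition log2dag_ratio (R : realType) (a b : R) : R :=
  if b == 0 then 1 else Num.max 0 (Num.min 1 (ln (a / b) / ln 2)).

From HB Require Import structures.
From mathcomp Require Import all_boot all_order all_algebra.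
From mathcomp Require Import all_classical all_reals all_analysis.
From mathcomp Require Import ring lra.
Import Order.TTheory GRing.Theory Num.Theory.
Local Open Scope classical_set_scope.
Local Open Scope ring_scope.

(* Since ln is concave, it lies above its chord on [1/2, 1]; hence
   log_2^dagger(a/b) <= 2 (1 - b/a) whenever 0 <= b <= a.  Summing over the
   signal coordinates, d-self-bounding gives sum_i log_2^dagger(v_j/v_j^(i))
   <= 2d for every bidder j.  Enlarging the range of i to all bidders and
   exchanging the sums, the claim follows from
   sum_j m / (j (j+1)) = m (1 - 1/(n+1)) <= m. *)

Lemma ler_sum_filter (R : numDomainType) (I : finType) (P : pred I) (F : I -> R) :
  (forall i, 0 <= F i) -> \sum_(i | P i) F i <= \sum_i F i.
Proof.
move=> F_ge0; rewrite [X in _ <= X](bigID P) /= lerDl.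
by apply: sumr_ge0.
Qed.

Lemma sum_inv_mul_succ (R : realFieldType) (N : nat) :
  \sum_(j < N) (1 / (j.+1 * j.+2)%:R : R) = 1 - 1 / N.+1%:R.
Proof.
elim: N => [|N IH]; first by rewrite big_ord0 divr1 subrr.
rewrite big_ord_recr /= IH natrM.
have N1_neq0 : (N.+1%:R : R) != 0 by rewrite pnatr_eq0.
have N2_neq0 : (N.+2%:R : R) != 0 by rewrite pnatr_eq0.
rewrite [N.+2%:R]mulrS [N.+1%:R]mulrS in N1_neq0 N2_neq0 *.
by field; rewrite N1_neq0 N2_neq0.
Qed.

Lemma ln_ge_chord_half (R : realType) (r : R) :
  1 / 2 <= r <= 1 -> - (2 * (1 - r) * ln 2) <= ln r.
Proof.
case/andP=> r_ge r_le1.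
have t_ge0 : 0 <= 2 * r - 1 by lra.
have t_le1 : 2 * r - 1 <= 1 by lra.
have := @concave_ln R (Itv01 t_ge0 t_le1) 1 (1 / 2) ltr01 ltac:(lra).
rewrite !convRE /= ln1 mulr0 add0r.
have -> : (2 * r - 1) * 1 + (1 - (2 * r - 1)) * (1 / 2) = r by field.
rewrite mul1r lnV ?posrE // /unstable.onem.
by have -> : (1 - (2 * r - 1)) * - ln (2 : R) = - (2 * (1 - r) * ln 2) by ring.
Qed.

Lemma log2dag_ratio_ge0 (R : realType) (a b : R) : 0 <= log2dag_ratio a b.
Proof. by rewrite /log2dag_ratio; case: eqP => _; rewrite ?ler01 ?le_max ?lexx. Qed.

Lemma log2dag_ratio_le (R : realType) (a b : R) :
  0 < a -> 0 <= b <= a -> log2dag_ratio a b <= 2 * (1 - b / a).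
Proof.
move=> a_gt0 /andP[b_ge0 b_le_a]; rewrite /log2dag_ratio.
have r_le1 : b / a <= 1 by rewrite ler_pdivrMr // mul1r.
have r_ge0 : 0 <= b / a by rewrite divr_ge0 // ltW.
case: eqP => [->|/eqP b_neq0]; first by rewrite mul0r subr0; lra.
have b_gt0 : 0 < b by rewrite lt_neqAle eq_sym b_neq0.
rewrite ge_max; apply/andP; split; first lra.
have [r_le_half|r_gt_half] := leP (b / a) (1 / 2).
  by rewrite ge_min; apply/orP; left; lra.
rewrite ge_min; apply/orP; right.
have ln2_gt0 : 0 < ln (2 : R) by rewrite ln_gt0 // ltr1n.
rewrite ler_pdivrMr // -invf_div lnV ?posrE ?divr_gt0 // lerNl.
by apply: ln_ge_chord_half; rewrite ltW.
Qed.

Section LowerEstimate.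
Variables (R : realType) (n : nat) (S : 'I_n -> set R).
Variables (w : ('I_n -> R) -> R) (s : 'I_n -> R).
Hypothesis w_gt0 : forall t, in_prod S t -> 0 < w t.
Hypothesis s_in : in_prod S s.

Lemma lower_est_bounds i : 0 <= lower_est S w i s <= w s.
Proof.
rewrite /lower_est; set E := [set w (upd s i o) | o in S i].
have upd_in x : S i x -> in_prod S (upd s i x).
  by move=> S_x l; rewrite /upd; case: eqP => [->|].
have E_lb0 : lbound E 0.
  by move=> y [x S_x <-]; apply/ltW/w_gt0/upd_in.
have E_ws : E (w s).
  by exists (s i) => //; congr w; apply: funext => l; rewrite /upd; case: eqP => [->|].
apply/andP; split; first by apply: lb_le_inf => //; exists (w s).
by apply: ge_inf => //; exists 0.
Qed.

Lemma self_bounding_sum_log2dag_le (d : R) :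
  self_bounding S d w ->
  \sum_(i < n) log2dag_ratio (w s) (lower_est S w i s) <= 2 * d.
Proof.
move=> /(_ s s_in) sb; have ws_gt0 := w_gt0 s s_in.
apply: le_trans (_ : \sum_(i < n) 2 * (1 - lower_est S w i s / w s) <= _).
  by apply: ler_sum => i _; apply: log2dag_ratio_le => //; apply: lower_est_bounds.
rewrite -mulr_sumr ler_pM2l ?ltr0n //.
have -> : \sum_(i < n) (1 - lower_est S w i s / w s) =
          (\sum_(i < n) (w s - lower_est S w i s)) / w s.
  by rewrite mulr_suml; apply: eq_bigr => i _; rewrite mulrBl divff ?gt_eqF.
by rewrite ler_pdivrMr.
Qed.

End LowerEstimate.

Theorem mainTheorem18 (R : realType) (n m d : nat)
    (S : 'I_n -> set R) (v : 'I_n -> ('I_n -> R) -> R) (s : 'I_n -> R)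
    (hm1 : (1 <= m)%N) (hmn : (m < n)%N)
    (hd1 : (1 <= d)%N) (hdn : (d <= n)%N)
    (hpos : forall j t, in_prod S t -> 0 < v j t)
    (hsb : forall j, self_bounding S d%:R (v j))
    (hs : in_prod S s)
    (hsorted : forall i j : 'I_n, (i <= j)%N -> v j s <= v i s) :
  let k : nat := \max_(j < n | vnum v m s / 2 < v j s) j.+1 in
  let A (i : 'I_n) : R :=
    \sum_(j < n | (j.+1 <= k)%N)
      (m%:R / (j.+1 * j.+2)%:R) * log2dag_ratio (v j s) (lower_est S (v j) i s) in
  \sum_(i < n | (m <= i.+1 <= k)%N) A i <= 2 * d%:R * m%:R.
Proof.
cbv zeta; set k := (\max_(j < n | _) j.+1)%N.
apply: le_trans (_ : _ <= \sum_i _) _.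
  apply: ler_sum_filter => i.
  by apply: sumr_ge0 => j _; rewrite mulr_ge0 ?log2dag_ratio_ge0.
rewrite exchange_big /=.
apply: le_trans (_ : \sum_(j < n | (j.+1 <= k)%N)
                       m%:R / (j.+1 * j.+2)%:R * (2 * d%:R) <= _).
  apply: ler_sum => j _; rewrite -mulr_sumr ler_wpM2l //.
  exact: self_bounding_sum_log2dag_le (hpos j) hs _ (hsb j).
apply: le_trans (_ : _ <= \sum_j _) _.
  by apply: ler_sum_filter => j; rewrite mulr_ge0 ?mulr_ge0.
rewrite -mulr_suml mulrC ler_wpM2l ?mulr_ge0 //.
have -> : \sum_(j < n) (m%:R / (j.+1 * j.+2)%:R : R) = m%:R * (1 - 1 / n.+1%:R).
  by rewrite -sum_inv_mul_succ mulr_sumr; apply: eq_bigr => j _; rewrite mul1r.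
by apply: ler_piMr; rewrite // gerBl divr_ge0.
Qed.
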